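(* For any $c\neq0$, the $\mu$HS equation has a one-parameter family of smooth periodic traveling waves of period one and a one-parameter family of cusped periodic traveling waves of period one moving with speed $c$. That is, there are one-parameter families of $1$-periodic $\varphi\in H^1_{loc}(\mathbb{R})$ (smooth in the first family; smooth except for cusps at the points where $\varphi=c$ in the second) such that, with $\mu:=\int_0^1\varphi\,dx$, for some $a\in\mathbb{R}$, $$\varphi_x^2=-4\mu\varphi+\big((\varphi-c)^2\big)_{xx}+a\quad\text{in }\mathcal{D}'(\mathbb{R}),$$ so that $u(t,x)=\varphi(x-ct)$ is a traveling wave of $-u_{txx}=-2\mu(u)u_x+2u_xu_{xx}+uu_{xxx}$ on $S^1=\mathbb{R}/\mathbb{Z}$.
   Context: $\mu(u)=\int_{S^1}u\,dx$ for $u$ on $S^1=\mathbb{R}/\mathbb{Z}$. A traveling wave of speed $c$ is a solution of the form $u(t,x)=\varphi(x-ct)$, understood weakly via the displayed distributional equation. *)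

From Stdlib Require Import Reals Lra List.
Import ListNotations.
Open Scope R_scope.

(* ---------- Henstock–Kurzweil (gauge) integral on [a,b] ----------
   Used so that unbounded integrands such as phi_x^2 near a cusp can be
   integrated; for nonnegative (and for Lebesgue integrable) functions it
   agrees with the Lebesgue integral. *)

(* A tagged division of [a,b]: list of (tag t, right endpoint x); the left
   endpoint of each piece is the previous right endpoint (initially a). *)
Fixpoint fine_tdiv (delta : R -> R) (a b : R) (P : list (R * R)) : Prop :=
  match P with
  | [] => a = b
  | (t, x) :: P' =>
      a < x /\ a <= t <= x /\ t - delta t < a /\ x < t + delta t
      /\ fine_tdiv delta x b P'
  end.

Fixpoint rsum (f : R -> R) (a : R) (P : list (R * R)) : R :=
  match P with
  | [] => 0
  | (t, x) :: P' => f t * (x - a) + rsum f x P'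
  end.

Definition HK_integral (f : R -> R) (a b I : R) : Prop :=
  a <= b /\
  forall eps, 0 < eps ->
    exists delta : R -> R, (forall x, 0 < delta x) /\
      forall P, fine_tdiv delta a b P -> Rabs (rsum f a P - I) < eps.

Definition smooth (f : R -> R) : Prop :=
  exists D : nat -> R -> R, D 0%nat = f /\
    forall n x, derivable_pt_lim (D n) x (D (S n) x).

Definition smooth_off (phi : R -> R) (c : R) : Prop :=
  exists D : nat -> R -> R, D 0%nat = phi /\
    forall n x, phi x <> c -> derivable_pt_lim (D n) x (D (S n) x).

(* ---------- H^1_loc with weak derivative g ----------
   phi is the indefinite (HK) integral of g on every bounded interval and
   g^2 is integrable on every bounded interval (g in L^2_loc). *)
Definition H1loc_with (phi g : R -> R) : Prop :=
  (forall x y, x <= y -> HK_integral g x y (phi y - phi x)) /\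
  (forall x y, x <= y -> exists I, HK_integral (fun z => (g z) ^ 2) x y I).

(* ---------- the weak (distributional) equation ----------
   phi_x^2 = -4 mu phi + ((phi - c)^2)_xx + a  in D'(R), tested against
   smooth psi = D 0 supported in [-M, M]. *)
Definition weak_eq (phi g : R -> R) (mu a c : R) : Prop :=
  forall (D : nat -> R -> R) (M : R),
    0 < M ->
    (forall n x, derivable_pt_lim (D n) x (D (S n) x)) ->
    (forall x, M <= Rabs x -> D 0%nat x = 0) ->
    exists I,
      HK_integral (fun x => (g x) ^ 2 * D 0%nat x) (- M) M I /\
      HK_integral (fun x => (-4 * mu * phi x + a) * D 0%nat x
                            + (phi x - c) ^ 2 * D 2%nat x) (- M) M I.

Definition traveling_wave (c : R) (phi : R -> R) : Prop :=
  (forall x, phi (x + 1) = phi x) /\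
  exists (g : R -> R) (mu a : R),
    H1loc_with phi g /\ HK_integral phi 0 1 mu /\ weak_eq phi g mu a c.

Definition deriv_to_pinf_left (phi : R -> R) (x0 : R) : Prop :=
  forall K, exists eta, 0 < eta /\
    forall x l, x0 - eta < x < x0 -> derivable_pt_lim phi x l -> K < l.
Definition deriv_to_ninf_left (phi : R -> R) (x0 : R) : Prop :=
  forall K, exists eta, 0 < eta /\
    forall x l, x0 - eta < x < x0 -> derivable_pt_lim phi x l -> l < K.
Definition deriv_to_pinf_right (phi : R -> R) (x0 : R) : Prop :=
  forall K, exists eta, 0 < eta /\
    forall x l, x0 < x < x0 + eta -> derivable_pt_lim phi x l -> K < l.
Definition deriv_to_ninf_right (phi : R -> R) (x0 : R) : Prop :=
  forall K, exists eta, 0 < eta /\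
    forall x l, x0 < x < x0 + eta -> derivable_pt_lim phi x l -> l < K.

Definition cusp_at (phi : R -> R) (x0 : R) : Prop :=
  exists r, 0 < r /\
    (forall x, 0 < Rabs (x - x0) < r -> exists l, derivable_pt_lim phi x l) /\
    ((deriv_to_pinf_left phi x0 /\ deriv_to_ninf_right phi x0) \/
     (deriv_to_ninf_left phi x0 /\ deriv_to_pinf_right phi x0)).

Definition smooth_wave (c : R) (phi : R -> R) : Prop :=
  traveling_wave c phi /\ smooth phi /\ (exists x y, phi x <> phi y).

Definition cusped_wave (c : R) (phi : R -> R) : Prop :=
  traveling_wave c phi /\ smooth_off phi c /\ (exists x, phi x = c) /\
  (forall x, phi x = c -> cusp_at phi x).

Definition translates (f h : R -> R) : Prop :=
  exists tau, forall x, f x = h (x + tau).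

Definition one_param_family (W : (R -> R) -> Prop) : Prop :=
  exists (p q : R) (Phi : R -> R -> R), p < q /\
    (forall s, p < s < q -> W (Phi s)) /\
    (forall s s', p < s < q -> p < s' < q -> s <> s' ->
        ~ translates (Phi s) (Phi s')).

From Stdlib Require Import Reals Lra Lia ClassicalEpsilon ZArith.
From Coquelicot Require Import Coquelicot.
Open Scope R_scope.

(* For 0 < be <= al and s with al - be + s > 0 put
   P(theta) = al - be cos(theta) and w = P / sqrt(P + s).  The primitive
   X(theta) = int_0^theta w is an increasing bijection of R with
   X(theta + 2 PI) = X(theta) + T; writing Th for its inverse, the profile is
       phi(x) = c + lam P(Th(T x)),  lam = - c / (T^2/2 + A/T),  A = int_0^(2 PI) P w.
   It is 1-periodic with mean mu = - lam T^2 / 2, and wherever P(Th(T x)) <> 0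
   (i.e. off the integers) it satisfies phi'^2 = ((phi - c)^2)'' - 4 mu phi + a
   pointwise, provided s = 0 or al = be (lemma slope_identity).  The case
   s = 0, be < al gives smooth waves; al = be, s > 0 gives cusps at the
   integers, where the slope blows up like 1/theta. *)

(* The integers are the only points where the profiles may fail to be differentiable. *)
Definition isint (t : R) : Prop := exists k : Z, t = IZR k.

Lemma IZR_lt_succ (m n : Z) : IZR m < IZR n -> IZR m + 1 <= IZR n.
Proof. intros H%lt_IZR. rewrite <- plus_IZR. apply IZR_le. lia. Qed.

Lemma up_le (x y : R) : x <= y -> IZR (up x) <= IZR (up y).
Proof.
  intros Hxy. destruct (archimed x), (archimed y).
  destruct (Rle_lt_dec (IZR (up x)) (IZR (up y))) as [h|h%IZR_lt_succ]; lra.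
Qed.

Lemma isint_up (t : R) : isint t <-> IZR (up t) = t + 1.
Proof.
  split.
  - intros [k ->]. rewrite <- (tech_up (IZR k) (k + 1)); rewrite plus_IZR; lra.
  - intros H. exists (up t - 1)%Z. rewrite minus_IZR. lra.
Qed.

Lemma not_isint_between (k : Z) (y : R) : IZR k < y < IZR k + 1 -> ~ isint y.
Proof.
  intros [H1 H2] [m ->]. apply lt_IZR in H1.
  rewrite <- plus_IZR in H2. apply lt_IZR in H2. lia.
Qed.

(* An integer tags at most two consecutive pieces
   of a tagged division of [l,b], so integer-tagged pieces number at most
   int_budget b l = 2 #(Z cap (l,b]) + [l is an integer]. *)
Definition int_indicator (l : R) : R :=
  if Req_EM_T (IZR (up l)) (l + 1) then 1 else 0.

Definition int_budget (b l : R) : R :=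
  2 * (IZR (up b) - IZR (up l)) + int_indicator l.

Lemma int_indicator_bounds (l : R) : 0 <= int_indicator l <= 1.
Proof. unfold int_indicator; destruct Req_EM_T; lra. Qed.

Lemma int_indicator_int (l : R) : isint l -> int_indicator l = 1.
Proof. intros H%isint_up. unfold int_indicator. destruct Req_EM_T; [lra|contradiction]. Qed.

Lemma int_budget_nonneg (b l : R) : l <= b -> 0 <= int_budget b l.
Proof.
  intros H. unfold int_budget. pose proof (up_le l b H). pose proof (int_indicator_bounds l). lra.
Qed.

Lemma int_budget_int_tag (b l t x : R) : l <= t <= x -> l < x -> isint t ->
  int_budget b x + 1 <= int_budget b l.
Proof.
  intros [H1 H2] H3 Ht. unfold int_budget.
  pose proof (int_indicator_bounds x).
  destruct (Req_dec t l) as [<-|E].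
  - rewrite (int_indicator_int t Ht).
    unfold int_indicator. destruct Req_EM_T as [e|e].
    + assert (Hx : isint x) by (apply isint_up; lra).
      apply isint_up in Ht as Et. rewrite e, Et.
      destruct Ht as [k ->], Hx as [m ->]. apply IZR_lt_succ in H3. lra.
    + pose proof (up_le t x H2). lra.
  - destruct (archimed x), (archimed l). destruct Ht as [k ->].
    assert (IZR (up l) <= IZR k).
    { destruct (Rle_lt_dec (IZR (up l)) (IZR k)) as [h|h%IZR_lt_succ]; lra. }
    destruct (Rlt_le_dec (IZR k) (IZR (up x))) as [C%IZR_lt_succ|C].
    + pose proof (int_indicator_bounds l). lra.
    + lra.
Qed.

Lemma int_budget_no_int (b l x : R) (n : Z) : IZR n - 1 < l -> l <= x -> x < IZR n ->
  int_budget b x = int_budget b l.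
Proof.
  intros H1 H2 H3. unfold int_budget, int_indicator.
  assert (E1 : up l = n) by (symmetry; apply tech_up; lra).
  assert (E2 : up x = n) by (symmetry; apply tech_up; lra).
  rewrite E1, E2. destruct Req_EM_T, Req_EM_T; lra.
Qed.

Lemma fine_tdiv_le (d : R -> R) (P : list (R * R)) (a b : R) :
  fine_tdiv d a b P -> a <= b.
Proof.
  revert a. induction P as [|[t x] P IH]; simpl; intros a H.
  - lra.
  - destruct H as (H1 & _ & _ & _ & H5). apply IH in H5. lra.
Qed.

Lemma rsum_error (F f d : R -> R) (eta beta a b : R) :
  0 <= eta -> 0 <= beta ->
  (forall l t x, a <= l -> l <= t <= x -> l < x -> x <= b ->
     t - d t < l -> x < t + d t ->
     (isint t -> Rabs (f t * (x - l) - (F x - F l)) <= beta) /\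
     (~ isint t -> Rabs (f t * (x - l) - (F x - F l)) <= eta * (x - l)
                   /\ int_budget b x = int_budget b l)) ->
  forall P l, a <= l -> fine_tdiv d l b P ->
    Rabs (rsum f l P - (F b - F l)) <= eta * (b - l) + beta * int_budget b l.
Proof.
  intros He Hb Hpiece P.
  induction P as [|[t x] P IH]; simpl; intros l Hal H.
  - subst l. replace (0 - (F b - F b)) with 0 by ring. rewrite Rabs_R0.
    pose proof (int_budget_nonneg b b (Rle_refl b)). nra.
  - destruct H as (H1 & H2 & H3 & H4 & H5).
    pose proof (fine_tdiv_le _ _ _ _ H5) as Hxb.
    specialize (IH x ltac:(lra) H5).
    destruct (Hpiece l t x Hal H2 H1 Hxb H3 H4) as [Hint Hreg].
    replace (f t * (x - l) + rsum f x P - (F b - F l))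
      with ((f t * (x - l) - (F x - F l)) + (rsum f x P - (F b - F x))) by ring.
    eapply Rle_trans; [apply Rabs_triang|].
    destruct (classic (isint t)) as [It|It].
    + specialize (Hint It). pose proof (int_budget_int_tag b l t x H2 H1 It). nra.
    + destruct (Hreg It) as [Hr Heq]. rewrite Heq in IH. nra.
Qed.

Lemma continuity_pt_ball (F : R -> R) (t e : R) : continuity_pt F t -> 0 < e ->
  exists d, 0 < d /\ forall y, Rabs (y - t) < d -> Rabs (F y - F t) < e.
Proof.
  intros H He. destruct (H e He) as [d [Hd Hy]]. exists d; split; auto.
  intros y Hyt. destruct (Req_dec y t) as [->|Hne].
  - rewrite Rminus_diag, Rabs_R0; auto.
  - apply (Hy y). repeat split; auto.
Qed.

Lemma derivable_pt_lim_ball (F : R -> R) (t l e : R) : derivable_pt_lim F t l -> 0 < e ->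
  exists d, 0 < d /\ forall y, Rabs (y - t) < d ->
    Rabs (F y - F t - l * (y - t)) <= e * Rabs (y - t).
Proof.
  intros H He. destruct (H e He) as [[d Hd] Hy]. exists d; split; auto.
  intros y Hyt. destruct (Req_dec y t) as [->|Hne].
  - rewrite !Rminus_diag, Rmult_0_r, Rminus_diag, !Rabs_R0. lra.
  - specialize (Hy (y - t) ltac:(lra) Hyt). replace (t + (y - t)) with y in Hy by ring.
    replace (F y - F t - l * (y - t)) with (((F y - F t) / (y - t) - l) * (y - t))
      by (field; lra).
    rewrite Rabs_mult. apply Rmult_le_compat_r; [apply Rabs_pos|lra].
Qed.

(* Gauge requirements at integer tags (F almost constant, tiny pieces) and at
   regular tags (straddle lemma, pieces avoid integers). *)
Section GaugeFTC.
Variables (F f : R -> R).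

Definition gauge_ok_at_int (beta t d : R) : Prop :=
  (forall y, Rabs (y - t) < d -> Rabs (F y - F t) < beta / 3) /\
  2 * d * Rabs (f t) <= beta / 3.

Definition gauge_ok_at_reg (eta t d : R) : Prop :=
  (forall y, Rabs (y - t) < d -> Rabs (F y - F t - f t * (y - t)) <= eta * Rabs (y - t)) /\
  d <= t - (IZR (up t) - 1) /\ d <= IZR (up t) - t.

Lemma gauge_at_int (beta t : R) : continuity_pt F t -> 0 < beta ->
  exists d, 0 < d /\ gauge_ok_at_int beta t d.
Proof.
  intros Hc Hb.
  destruct (continuity_pt_ball F t (beta / 3) Hc ltac:(lra)) as [d1 [Hd1 H1]].
  pose proof (Rabs_pos (f t)).
  set (d2 := beta / (6 * (Rabs (f t) + 1))).
  assert (Hd2 : 0 < d2) by (apply Rdiv_lt_0_compat; lra).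
  assert (Hd2f : d2 * (6 * (Rabs (f t) + 1)) = beta) by (unfold d2; field; lra).
  exists (Rmin d1 d2). pose proof (Rmin_l d1 d2). pose proof (Rmin_r d1 d2).
  split; [now apply Rmin_glb_lt|split].
  - intros y Hy. apply H1. lra.
  - assert (Rmin d1 d2 * Rabs (f t) <= d2 * Rabs (f t)) by (apply Rmult_le_compat_r; lra).
    assert (d2 * Rabs (f t) * 6 <= beta) by (rewrite <- Hd2f; lra).
    lra.
Qed.

Lemma gauge_at_reg (eta t : R) : ~ isint t -> derivable_pt_lim F t (f t) -> 0 < eta ->
  exists d, 0 < d /\ gauge_ok_at_reg eta t d.
Proof.
  intros Ht Hd He.
  destruct (derivable_pt_lim_ball F t (f t) eta Hd He) as [d1 [Hd1 H1]].
  destruct (archimed t) as [A1 A2].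
  assert (IZR (up t) - 1 < t).
  { destruct (Rle_lt_or_eq_dec _ _ A2) as [h|h]; [lra|].
    exfalso; apply Ht, isint_up; lra. }
  set (d2 := Rmin (t - (IZR (up t) - 1)) (IZR (up t) - t)).
  exists (Rmin d1 d2).
  pose proof (Rmin_l d1 d2). pose proof (Rmin_r d1 d2). unfold d2 in *.
  pose proof (Rmin_l (t - (IZR (up t) - 1)) (IZR (up t) - t)).
  pose proof (Rmin_r (t - (IZR (up t) - 1)) (IZR (up t) - t)).
  split; [repeat apply Rmin_glb_lt; lra|split; [|split]].
  - intros y Hy. apply H1. lra.
  - lra.
  - lra.
Qed.

Lemma piece_at_int (beta t d l x : R) : gauge_ok_at_int beta t d ->
  l <= t <= x -> t - d < l -> x < t + d ->
  Rabs (f t * (x - l) - (F x - F l)) <= beta.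
Proof.
  intros [Hc Hf] [Hlt Htx] Hl Hx.
  assert (E1 := Hc x ltac:(apply Rabs_def1; lra)).
  assert (E2 := Hc l ltac:(apply Rabs_def1; lra)).
  replace (f t * (x - l) - (F x - F l)) with (f t * (x - l) - (F x - F t) + (F l - F t)) by ring.
  eapply Rle_trans; [apply Rabs_triang|].
  eapply Rle_trans; [apply Rplus_le_compat_r, Rabs_triang|].
  rewrite Rabs_Ropp, Rabs_mult, (Rabs_right (x - l)) by lra.
  pose proof (Rabs_pos (f t)). nra.
Qed.

Lemma piece_at_reg (eta b t d l x : R) : gauge_ok_at_reg eta t d ->
  l <= t <= x -> t - d < l -> x < t + d ->
  Rabs (f t * (x - l) - (F x - F l)) <= eta * (x - l) /\
  int_budget b x = int_budget b l.
Proof.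
  intros [Hs [Hd1 Hd2]] [Hlt Htx] Hl Hx.
  assert (E1 := Hs x ltac:(apply Rabs_def1; lra)).
  assert (E2 := Hs l ltac:(apply Rabs_def1; lra)).
  split.
  - replace (f t * (x - l) - (F x - F l))
      with (- (F x - F t - f t * (x - t)) + (F l - F t - f t * (l - t))) by ring.
    eapply Rle_trans; [apply Rabs_triang|]. rewrite Rabs_Ropp.
    rewrite (Rabs_right (x - t)) in E1 by lra.
    rewrite (Rabs_left1 (l - t)) in E2 by lra. lra.
  - apply (int_budget_no_int b l x (up t)); lra.
Qed.

Lemma HK_FTC (a b : R) : a <= b ->
  (forall t, a <= t <= b -> continuity_pt F t) ->
  (forall t, a <= t <= b -> ~ isint t -> derivable_pt_lim F t (f t)) ->
  HK_integral f a b (F b - F a).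
Proof.
  intros Hab Hc Hd. split; auto. intros eps Heps.
  pose proof (int_budget_nonneg b a Hab) as HB.
  set (eta := eps / (2 * (b - a + 1))).
  set (beta := eps / (2 * (int_budget b a + 1))).
  assert (Heta : 0 < eta) by (apply Rdiv_lt_0_compat; lra).
  assert (Hbeta : 0 < beta) by (apply Rdiv_lt_0_compat; lra).
  assert (Hg : forall t, exists d, 0 < d /\
     (a <= t <= b -> isint t -> gauge_ok_at_int beta t d) /\
     (a <= t <= b -> ~ isint t -> gauge_ok_at_reg eta t d)).
  { intro t. destruct (classic (a <= t <= b)) as [Ht|Ht].
    2: { exists 1. split; [lra|split; intros; contradiction]. }
    destruct (classic (isint t)) as [It|It].
    - destruct (gauge_at_int beta t (Hc t Ht) Hbeta) as [d [Hd0 Hd1]].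
      exists d. split; [exact Hd0|split; intros; [exact Hd1|contradiction]].
    - destruct (gauge_at_reg eta t It (Hd t Ht It) Heta) as [d [Hd0 Hd1]].
      exists d. split; [exact Hd0|split; intros; [contradiction|exact Hd1]]. }
  apply choice in Hg as [delta Hdelta].
  exists delta. split; [intro t; apply Hdelta|]. intros P HP.
  assert (Hbound : Rabs (rsum f a P - (F b - F a)) <= eta * (b - a) + beta * int_budget b a).
  { apply (rsum_error F f delta eta beta a b); [lra|lra| |lra|exact HP].
    intros l t x Hal Hltx Hlx Hxb Hl Hx.
    destruct (Hdelta t) as [_ [Hi Hr]].
    split; intro It.
    - apply (piece_at_int beta t (delta t)); auto. apply Hi; auto; lra.
    - apply (piece_at_reg eta b t (delta t)); auto. apply Hr; auto; lra. }
  assert (eta * (b - a) < eps / 2).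
  { unfold eta. apply (Rmult_lt_reg_r (2 * (b - a + 1))); [lra|].
    field_simplify; lra. }
  assert (beta * int_budget b a < eps / 2).
  { unfold beta. apply (Rmult_lt_reg_r (2 * (int_budget b a + 1))); [lra|].
    field_simplify; nra. }
  lra.
Qed.

End GaugeFTC.

Lemma RInt_deriv (f : R -> R) : (forall x, continuity_pt f x) ->
  forall x, derivable_pt_lim (fun y => RInt f 0 y) x (f x).
Proof.
  intros Hc x. apply is_derive_Reals, (is_derive_RInt _ _ 0).
  - apply filter_forall. intros b.
    apply (RInt_correct (V := R_CompleteNormedModule)), ex_RInt_continuous.
    intros z _. apply continuity_pt_filterlim, Hc.
  - apply continuity_pt_filterlim, Hc.
Qed.

Lemma deriv_zero_const (F : R -> R) (a b : R) : a <= b ->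
  (forall x, a <= x <= b -> derivable_pt_lim F x 0) -> F b = F a.
Proof.
  intros Hab H. destruct (Req_dec a b) as [->|Hne]; auto.
  destruct (MVT_cor2 F (fun _ => 0) a b ltac:(lra) H) as [c [Hc _]]. lra.
Qed.

Lemma deriv_at_flat_side (f : R -> R) (M l : R) :
  (forall x, M <= x -> f x = 0) \/ (forall x, x <= M -> f x = 0) ->
  derivable_pt_lim f M l -> l = 0.
Proof.
  intros Hz H. destruct (Req_dec l 0) as [|Hn]; auto. exfalso.
  destruct (H (Rabs l) (Rabs_pos_lt l Hn)) as [[d Hd] Hdd]. simpl in Hdd.
  assert (Hh : exists h, h <> 0 /\ Rabs h < d /\ f (M + h) = 0 /\ f M = 0).
  { destruct Hz as [Hr|Hl]; [exists (d / 2)|exists (- (d / 2))].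
    - rewrite Rabs_right, !Hr; lra.
    - rewrite Rabs_left, !Hl; lra. }
  destruct Hh as (h & Hh0 & Hhd & E1 & E2).
  specialize (Hdd h Hh0 Hhd). rewrite E1, E2 in Hdd.
  replace ((0 - 0) / h - l) with (- l) in Hdd by (field; auto).
  rewrite Rabs_Ropp in Hdd. lra.
Qed.

(* A test function supported in [-M, M] vanishes with its derivative at +-M,
   so integrations by parts over [-M, M] have no boundary terms. *)
Lemma test_fn_boundary (D : nat -> R -> R) (M : R) : 0 < M ->
  (forall n x, derivable_pt_lim (D n) x (D (S n) x)) ->
  (forall x, M <= Rabs x -> D 0%nat x = 0) ->
  D 0%nat M = 0 /\ D 0%nat (- M) = 0 /\ D 1%nat M = 0 /\ D 1%nat (- M) = 0.
Proof.
  intros HM Hd Hsupp.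
  split; [apply Hsupp; rewrite Rabs_right; lra|].
  split; [apply Hsupp; rewrite Rabs_left; lra|].
  split.
  - apply (deriv_at_flat_side (D 0%nat) M); [left|apply Hd].
    intros x Hx. apply Hsupp. rewrite Rabs_right; lra.
  - apply (deriv_at_flat_side (D 0%nat) (- M)); [right|apply Hd].
    intros x Hx. apply Hsupp. rewrite Rabs_left; lra.
Qed.

Lemma derivable_pt_lim_shift (f : R -> R) (x tau l : R) :
  derivable_pt_lim f (x + tau) l -> derivable_pt_lim (fun y => f (y + tau)) x l.
Proof.
  intros H. replace l with (l * (1 + 0)) by ring.
  apply (derivable_pt_lim_comp (fun y => y + tau) f); auto.
  apply derivable_pt_lim_plus; [apply derivable_pt_lim_id|apply derivable_pt_lim_const].
Qed.

Section InverseFunction.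
Variables (F G : R -> R).
Hypothesis F_G : forall y, F (G y) = y.
Hypothesis F_strict : forall a b, a < b -> F a < F b.

Lemma inv_left (t : R) : G (F t) = t.
Proof.
  destruct (Rtotal_order (G (F t)) t) as [h|[h|h]]; auto;
    apply F_strict in h; rewrite F_G in h; lra.
Qed.

Lemma inv_strict (x y : R) : x < y -> G x < G y.
Proof.
  intros H. destruct (Rlt_le_dec (G x) (G y)) as [h|[h|h]]; auto;
    [apply F_strict in h| apply (f_equal F) in h]; rewrite !F_G in h; lra.
Qed.

Lemma inv_continuous (y : R) : continuity_pt G y.
Proof.
  intros eps He. set (t := G y).
  assert (H1 : F (t - eps) < y) by (rewrite <- (F_G y); apply F_strict; unfold t; lra).
  assert (H2 : y < F (t + eps)) by (rewrite <- (F_G y); apply F_strict; unfold t; lra).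
  exists (Rmin (y - F (t - eps)) (F (t + eps) - y)). split; [apply Rmin_glb_lt; lra|].
  intros z [_ Hz]. simpl in Hz. unfold R_dist in Hz. simpl. unfold R_dist.
  pose proof (Rmin_l (y - F (t - eps)) (F (t + eps) - y)).
  pose proof (Rmin_r (y - F (t - eps)) (F (t + eps) - y)).
  destruct (Rabs_def2 _ _ Hz).
  assert (G z < t + eps) by (rewrite <- (inv_left (t + eps)); apply inv_strict; lra).
  assert (t - eps < G z) by (rewrite <- (inv_left (t - eps)); apply inv_strict; lra).
  apply Rabs_def1; unfold t in *; lra.
Qed.

Lemma inv_deriv (y w : R) : 0 < w -> derivable_pt_lim F (G y) w ->
  derivable_pt_lim G y (/ w).
Proof.
  intros Hw HF eps He. set (t := G y).
  set (rho := Rmin (w / 2) (eps * w * w / 2)).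
  assert (Hew : 0 < eps * w * w) by (repeat apply Rmult_lt_0_compat; lra).
  assert (Hrho : 0 < rho) by (apply Rmin_glb_lt; lra).
  assert (Hrho1 : rho <= w / 2) by apply Rmin_l.
  assert (Hrho2 : rho <= eps * w * w / 2) by apply Rmin_r.
  destruct (HF rho Hrho) as [[d1 Hd1] Hd].
  destruct (inv_continuous y d1 Hd1) as [d2 [Hd2 Hc2]].
  exists (mkposreal d2 Hd2). intros h Hh Hhd. simpl in *.
  set (k := G (y + h) - t).
  assert (Hk : k <> 0).
  { intro E. apply Hh. replace h with (F (G (y + h)) - F (G y)) by (rewrite !F_G; ring).
    unfold k, t in E. replace (G (y + h)) with (G y) by lra. ring. }
  assert (Hkd : Rabs k < d1).
  { apply Hc2. split; [split; [exact I|lra]|]. unfold R_dist.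
    replace (y + h - y) with h by ring. auto. }
  specialize (Hd k Hk Hkd).
  assert (Ek : F (G y + k) - F (G y) = h).
  { unfold k, t. replace (G y + (G (y + h) - G y)) with (G (y + h)) by ring.
    rewrite !F_G; ring. }
  rewrite Ek in Hd.
  replace (k / h) with (/ (h / k)) by (field; auto).
  set (q := h / k) in *.
  destruct (Rabs_def2 _ _ Hd) as [Q1 Q2].
  assert (Hq : w / 2 < q) by lra.
  replace (/ q - / w) with ((w - q) / (q * w)) by (field; split; lra).
  unfold Rdiv. rewrite Rabs_mult, Rabs_inv, (Rabs_right (q * w)) by nra.
  apply (Rmult_lt_reg_r (q * w)); [nra|].
  rewrite Rmult_assoc, Rinv_l, Rmult_1_r by nra.
  assert (Rabs (w - q) < rho) by (rewrite Rabs_minus_sym; apply Rabs_def1; lra).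
  assert (0 < eps * ((q - w / 2) * w)) by (apply Rmult_lt_0_compat; [lra|apply Rmult_lt_0_compat; lra]).
  nra.
Qed.

End InverseFunction.

Lemma cusp_from_blowup (f g : R -> R) (x0 kappa : R) : kappa <> 0 ->
  (forall y, 0 < Rabs (y - x0) < 1 -> derivable_pt_lim f y (kappa * g y)) ->
  (forall K, exists eta, 0 < eta /\ (forall y, x0 < y < x0 + eta -> K < g y) /\
                                  (forall y, x0 - eta < y < x0 -> g y < - K)) ->
  cusp_at f x0.
Proof.
  intros Hk Hd Hb.
  assert (Hscale : forall K, exists eta, 0 < eta /\
    (forall y l, x0 < y < x0 + eta -> derivable_pt_lim f y l ->
       (0 < kappa -> K < l) /\ (kappa < 0 -> l < K)) /\
    (forall y l, x0 - eta < y < x0 -> derivable_pt_lim f y l ->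
       (0 < kappa -> l < K) /\ (kappa < 0 -> K < l))).
  { intro K. set (K' := Rabs K / Rabs kappa).
    pose proof (Rabs_pos_lt kappa Hk) as Hka.
    assert (HK' : Rabs K = K' * Rabs kappa) by (unfold K'; field; lra).
    pose proof (Rle_abs K). pose proof (Rle_abs (- K)). rewrite Rabs_Ropp in *.
    destruct (Hb K') as [eta [He [HR HL]]].
    exists (Rmin eta 1). pose proof (Rmin_l eta 1). pose proof (Rmin_r eta 1).
    split; [apply Rmin_glb_lt; lra|split]; intros y l Hy Hl;
      (rewrite (uniqueness_limite f y l (kappa * g y) Hl);
       [|apply Hd; split; [apply Rabs_pos_lt|apply Rabs_def1]; lra]).
    - specialize (HR y ltac:(lra)). split; intros Hs.
      + rewrite (Rabs_right kappa) in HK' by lra. nra.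
      + rewrite (Rabs_left kappa) in HK' by lra. nra.
    - specialize (HL y ltac:(lra)). split; intros Hs.
      + rewrite (Rabs_right kappa) in HK' by lra. nra.
      + rewrite (Rabs_left kappa) in HK' by lra. nra. }
  exists 1. split; [lra|split].
  - intros y Hy. exists (kappa * g y). apply Hd, Hy.
  - destruct (Rlt_dec 0 kappa) as [Hp|Hn]; [right|left]; split; intro K;
      destruct (Hscale K) as [eta [He [HR HL]]]; exists eta; split; auto;
      intros y l Hy Hl; [apply (HL y l)|apply (HR y l)|apply (HL y l)|apply (HR y l)]; auto; lra.
Qed.

(* sin u / (1 - cos u) ~ 2/u blows up at 0; we only need the lower bound 1/u. *)
Lemma sin_ratio_gt (u : R) : 0 < u < PI / 2 -> 1 / u < sin u / (1 - cos u).
Proof.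
  intros Hu. pose proof (sin_gt_0 u ltac:(lra) ltac:(lra)) as Hs.
  pose proof (sin_lt_x u ltac:(lra)) as Hsx.
  pose proof (cos_ge_0 u ltac:(lra) ltac:(lra)) as Hc.
  pose proof (sin2_cos2 u) as SC. unfold Rsqr in SC.
  assert (Hc1 : cos u < 1) by nra.
  apply (Rmult_lt_reg_r (u * (1 - cos u))); [nra|].
  replace (1 / u * (u * (1 - cos u))) with (1 - cos u) by (field; lra).
  replace (sin u / (1 - cos u) * (u * (1 - cos u))) with (u * sin u) by (field; lra).
  nra.
Qed.

Lemma cos_sin_2kPI (k : Z) : cos (2 * IZR k * PI) = 1 /\ sin (2 * IZR k * PI) = 0.
Proof.
  assert (Hn : forall n : nat, cos (2 * INR n * PI) = 1 /\ sin (2 * INR n * PI) = 0).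
  { intro n. pose proof (cos_period 0 n). pose proof (sin_period 0 n).
    rewrite Rplus_0_l, cos_0, sin_0 in *. auto. }
  destruct (Z_le_gt_dec 0 k) as [h|h].
  - rewrite <- (Z2Nat.id k h), <- INR_IZR_INZ. apply Hn.
  - replace (2 * IZR k * PI) with (- (2 * INR (Z.to_nat (- k)) * PI))
      by (rewrite INR_IZR_INZ, Z2Nat.id, opp_IZR by lia; ring).
    rewrite cos_neg, sin_neg. destruct (Hn (Z.to_nat (- k))) as [-> ->]. split; ring.
Qed.

Lemma cos_perZ (t : R) (k : Z) : cos (t + 2 * IZR k * PI) = cos t.
Proof. destruct (cos_sin_2kPI k) as [C S]. rewrite cos_plus, C, S. ring. Qed.

Lemma sin_perZ (t : R) (k : Z) : sin (t + 2 * IZR k * PI) = sin t.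
Proof. destruct (cos_sin_2kPI k) as [C S]. rewrite sin_plus, C, S. ring. Qed.

Lemma cos_eq_1_inv (t : R) : cos t = 1 -> exists k : Z, t = 2 * IZR k * PI.
Proof.
  intros H. assert (Hs : sin t = 0).
  { pose proof (sin2_cos2 t) as SC. rewrite H in SC. unfold Rsqr in SC. nra. }
  destruct (sin_eq_0_0 t Hs) as [k Hk].
  destruct (Z.Even_or_Odd k) as [[j Hj]|[j Hj]].
  - exists j. rewrite Hk, Hj, mult_IZR. ring.
  - exfalso. rewrite Hk, Hj, plus_IZR, mult_IZR in H.
    replace ((2 * IZR j + 1) * PI) with (2 * IZR j * PI + PI) in H by ring.
    rewrite neg_cos, (proj1 (cos_sin_2kPI j)) in H. lra.
Qed.

Lemma cos_eq_1_isolated (t1 t2 : R) : t1 < t2 < t1 + 2 * PI -> cos t1 = 1 -> cos t2 <> 1.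
Proof.
  intros Ht H1 H2.
  destruct (cos_eq_1_inv t1 H1) as [k ->], (cos_eq_1_inv t2 H2) as [m ->].
  assert (IZR k < IZR m < IZR k + 1) by (pose proof PI_RGT_0; split; nra).
  apply (not_isint_between k (IZR m)); auto. exists m; auto.
Qed.

Lemma derivable_pt_lim_Rinv (f : R -> R) (x l : R) : f x <> 0 ->
  derivable_pt_lim f x l -> derivable_pt_lim (fun y => / f y) x (- l / (f x)²).
Proof.
  intros Hf Hd.
  replace (- l / (f x)²) with ((0 * f x - l * 1) / (f x)²) by (unfold Rsqr; field; auto).
  apply (derivable_pt_lim_ext (div_fct (fct_cte 1) f)).
  - intro y. unfold div_fct, fct_cte, Rdiv. ring.
  - apply derivable_pt_lim_div; auto. apply derivable_pt_lim_const.
Qed.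

(* The differential algebra generated by cos, sin, sqrt(P+s)^(+-1) and 1/P. *)
Inductive texpr : Type :=
  | TConst (r : R) | TCos | TSin | TRoot | TInvRoot | TInvP
  | TAdd (e1 e2 : texpr) | TMul (e1 e2 : texpr).

Fixpoint invP_free (e : texpr) : Prop :=
  match e with
  | TInvP => False
  | TAdd e1 e2 | TMul e1 e2 => invP_free e1 /\ invP_free e2
  | _ => True
  end.

Section Profile.
Variables (al be s : R).
Hypothesis Hbe : 0 < be.
Hypothesis Hle : be <= al.
Hypothesis Hpos : 0 < al - be + s.

Definition P (t : R) : R := al - be * cos t.

Fixpoint eval (e : texpr) (t : R) : R :=
  match e with
  | TConst r => r
  | TCos => cos t
  | TSin => sin t
  | TRoot => sqrt (P t + s)
  | TInvRoot => / sqrt (P t + s)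
  | TInvP => / P t
  | TAdd e1 e2 => eval e1 t + eval e2 t
  | TMul e1 e2 => eval e1 t * eval e2 t
  end.

Fixpoint dexpr (e : texpr) : texpr :=
  match e with
  | TConst _ => TConst 0
  | TCos => TMul (TConst (-1)) TSin
  | TSin => TCos
  | TRoot => TMul (TConst (be / 2)) (TMul TSin TInvRoot)
  | TInvRoot => TMul (TConst (- (be / 2))) (TMul TSin (TMul TInvRoot (TMul TInvRoot TInvRoot)))
  | TInvP => TMul (TConst (- be)) (TMul TSin (TMul TInvP TInvP))
  | TAdd e1 e2 => TAdd (dexpr e1) (dexpr e2)
  | TMul e1 e2 => TAdd (TMul (dexpr e1) e2) (TMul e1 (dexpr e2))
  end.

Lemma P_bounds (t : R) : al - be <= P t <= al + be.
Proof. unfold P. pose proof (COS_bound t). nra. Qed.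

Lemma P_nonneg (t : R) : 0 <= P t.
Proof. pose proof (P_bounds t). lra. Qed.

Lemma Ps_pos (t : R) : 0 < P t + s.
Proof. pose proof (P_bounds t). lra. Qed.

Lemma root_pos (t : R) : 0 < sqrt (P t + s).
Proof. apply sqrt_lt_R0, Ps_pos. Qed.

Lemma P_zero_cos (t : R) : P t = 0 -> cos t = 1.
Proof. unfold P. pose proof (COS_bound t). nra. Qed.

Lemma P_deriv (t : R) : derivable_pt_lim P t (be * sin t).
Proof.
  unfold P. replace (be * sin t) with (0 - be * - sin t) by ring.
  apply (derivable_pt_lim_minus (fun _ => al) (fun y => be * cos y)).
  - apply derivable_pt_lim_const.
  - apply derivable_pt_lim_scal, derivable_pt_lim_cos.
Qed.

Lemma root_deriv (t : R) :
  derivable_pt_lim (fun y => sqrt (P y + s)) t (be * sin t / (2 * sqrt (P t + s))).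
Proof.
  replace (be * sin t / (2 * sqrt (P t + s))) with (/ (2 * sqrt (P t + s)) * (be * sin t + 0))
    by (unfold Rdiv; ring).
  apply (derivable_pt_lim_comp (fun y => P y + s) sqrt).
  - apply derivable_pt_lim_plus; [apply P_deriv|apply derivable_pt_lim_const].
  - apply derivable_pt_lim_sqrt, Ps_pos.
Qed.

Lemma eval_deriv (e : texpr) (t : R) : invP_free e \/ P t <> 0 ->
  derivable_pt_lim (eval e) t (eval (dexpr e) t).
Proof.
  intros Hok. pose proof (root_pos t) as Hr.
  induction e; simpl in *.
  - apply derivable_pt_lim_const.
  - replace (-1 * sin t) with (- sin t) by ring. apply derivable_pt_lim_cos.
  - apply derivable_pt_lim_sin.
  - replace (be / 2 * (sin t * / sqrt (P t + s))) with (be * sin t / (2 * sqrt (P t + s)))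
      by (field; lra).
    apply root_deriv.
  - replace (- (be / 2) * (sin t * (/ sqrt (P t + s) * (/ sqrt (P t + s) * / sqrt (P t + s)))))
      with (- (be * sin t / (2 * sqrt (P t + s))) / (sqrt (P t + s))²)
      by (unfold Rsqr; field; lra).
    apply (derivable_pt_lim_Rinv (fun y => sqrt (P y + s))); [lra|apply root_deriv].
  - destruct Hok as [[]|HP].
    replace (- be * (sin t * (/ P t * / P t))) with (- (be * sin t) / (P t)²)
      by (unfold Rsqr; field; auto).
    apply (derivable_pt_lim_Rinv P); [auto|apply P_deriv].
  - apply derivable_pt_lim_plus; [apply IHe1|apply IHe2]; tauto.
  - apply derivable_pt_lim_mult; [apply IHe1|apply IHe2]; tauto.
Qed.

Lemma eval_perZ (e : texpr) (t : R) (k : Z) : eval e (t + 2 * IZR k * PI) = eval e t.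
Proof.
  induction e; simpl; unfold P; rewrite ?cos_perZ, ?sin_perZ, ?IHe1, ?IHe2; auto.
Qed.

(* [w] is d X / d theta, where x = X(theta)/T is the travelling variable. *)
Definition w (t : R) : R := P t / sqrt (P t + s).

Lemma w_nonneg (t : R) : 0 <= w t.
Proof.
  unfold w. pose proof (P_nonneg t). pose proof (root_pos t).
  apply Rmult_le_pos; [lra|]. left; apply Rinv_0_lt_compat; lra.
Qed.

Lemma w_pos (t : R) : P t <> 0 -> 0 < w t.
Proof.
  intros H. unfold w. pose proof (P_nonneg t). pose proof (root_pos t).
  apply Rdiv_lt_0_compat; lra.
Qed.

Lemma w_cont (t : R) : continuity_pt w t.
Proof.
  apply continuity_pt_div.
  - apply derivable_continuous_pt. exists (be * sin t). apply P_deriv.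
  - apply derivable_continuous_pt. exists (be * sin t / (2 * sqrt (P t + s))). apply root_deriv.
  - pose proof (root_pos t). lra.
Qed.

Lemma w_perZ (t : R) (k : Z) : w (t + 2 * IZR k * PI) = w t.
Proof. unfold w, P. rewrite cos_perZ. reflexivity. Qed.

(* X(theta) = int_0^theta w; one period of the wave corresponds to T = X(2 PI). *)
Definition X (t : R) : R := RInt w 0 t.
Definition T : R := X (2 * PI).

Lemma X_deriv (t : R) : derivable_pt_lim X t (w t).
Proof. apply RInt_deriv, w_cont. Qed.

Lemma X_0 : X 0 = 0.
Proof. exact (RInt_point 0 w). Qed.

Lemma X_cont (t : R) : continuity_pt X t.
Proof. apply derivable_continuous_pt. exists (w t). apply X_deriv. Qed.

Lemma X_incr (a b : R) : a <= b -> X a <= X b.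
Proof.
  intros H. destruct (Req_dec a b) as [->|Hne]; [lra|].
  destruct (MVT_cor2 X w a b ltac:(lra) (fun c _ => X_deriv c)) as [c [Hc _]].
  pose proof (w_nonneg c). nra.
Qed.

(* Since w vanishes only on 2 PI Z, X is strictly increasing. *)
Lemma X_strict (a b : R) : a < b -> X a < X b.
Proof.
  intros H. pose proof PI_RGT_0.
  set (b' := Rmin b (a + PI / 2)). set (m := (a + b') / 2).
  assert (Hb' : a < b' <= b /\ b' <= a + PI / 2).
  { split; [split|]; [apply Rmin_glb_lt; lra|apply Rmin_l|apply Rmin_r]. }
  destruct (MVT_cor2 X w a m ltac:(unfold m; lra) (fun c _ => X_deriv c)) as [c1 [E1 Hc1]].
  destruct (MVT_cor2 X w m b' ltac:(unfold m; lra) (fun c _ => X_deriv c)) as [c2 [E2 Hc2]].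
  pose proof (X_incr b' b ltac:(lra)). pose proof (w_nonneg c1). pose proof (w_nonneg c2).
  destruct (Req_dec (P c1) 0) as [Z1|Z1].
  - destruct (Req_dec (P c2) 0) as [Z2|Z2].
    + exfalso. apply P_zero_cos in Z1, Z2.
      apply (cos_eq_1_isolated c1 c2); auto. unfold m in *; lra.
    + pose proof (w_pos c2 Z2). unfold m in *. nra.
  - pose proof (w_pos c1 Z1). unfold m in *. nra.
Qed.

Lemma T_pos : 0 < T.
Proof. unfold T. rewrite <- X_0. apply X_strict. pose proof PI_RGT_0. lra. Qed.

Lemma X_per (t : R) : X (t + 2 * PI) = X t + T.
Proof.
  set (D := fun u => X (u + 2 * PI) - X u).
  assert (Hd : forall x, derivable_pt_lim D x 0).
  { intro x. replace 0 with (w (x + 2 * IZR 1 * PI) - w x) by (rewrite w_perZ; ring).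
    apply derivable_pt_lim_minus; [|apply X_deriv].
    apply derivable_pt_lim_shift. replace (2 * IZR 1 * PI) with (2 * PI) by (simpl; ring).
    apply X_deriv. }
  enough (D t = D 0) by (unfold D, T in *; rewrite Rplus_0_l, X_0 in *; lra).
  destruct (Rle_dec 0 t).
  - apply deriv_zero_const; auto.
  - symmetry. apply deriv_zero_const; auto; lra.
Qed.

Lemma X_perZ (t : R) (k : Z) : X (t + 2 * IZR k * PI) = X t + IZR k * T.
Proof.
  assert (Hn : forall (n : nat) u, X (u + 2 * INR n * PI) = X u + INR n * T).
  { induction n as [|n IH]; intros u.
    - simpl. rewrite Rmult_0_r, Rmult_0_l, Rplus_0_r, Rmult_0_l, Rplus_0_r. reflexivity.
    - rewrite S_INR.
      replace (u + 2 * (INR n + 1) * PI) with ((u + 2 * INR n * PI) + 2 * PI) by ring.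
      rewrite X_per, IH. ring. }
  destruct (Z_le_gt_dec 0 k) as [h|h].
  - rewrite <- (Z2Nat.id k h), <- INR_IZR_INZ. apply Hn.
  - pose proof (Hn (Z.to_nat (- k)) (t + 2 * IZR k * PI)) as E.
    rewrite INR_IZR_INZ, Z2Nat.id, opp_IZR in E by lia.
    replace (t + 2 * IZR k * PI + 2 * - IZR k * PI) with t in E by ring. lra.
Qed.

(* X is onto R, since X(2 PI k) = k T with T > 0. *)
Lemma X_surj (y : R) : exists t, X t = y.
Proof.
  pose proof T_pos as HT. pose proof PI_RGT_0.
  destruct (archimed (Rabs y / T)) as [A _].
  assert (Hn : Rabs y < IZR (up (Rabs y / T)) * T).
  { apply (Rmult_lt_compat_r T) in A; auto.
    replace (Rabs y / T * T) with (Rabs y) in A by (field; lra). lra. }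
  set (n := up (Rabs y / T)) in *.
  pose proof (X_perZ 0 n) as E1. pose proof (X_perZ 0 (- n)) as E2.
  rewrite Rplus_0_l, X_0, Rplus_0_l in E1, E2. rewrite opp_IZR in E2.
  assert (0 < IZR n) by (pose proof (Rabs_pos y); nra).
  destruct (IVT_cor (fun t => X t - y) (2 * - IZR n * PI) (2 * IZR n * PI)) as [t [Ht1 Ht2]].
  - intro x. apply continuity_pt_minus; [apply X_cont|apply continuity_pt_const; intros a b; auto].
  - nra.
  - simpl. rewrite E1, E2. destruct (Rabs_def2 y (IZR n * T)); nra.
  - exists t. lra.
Qed.

Definition Th (y : R) : R := epsilon (inhabits 0) (fun t => X t = y).

Lemma X_Th (y : R) : X (Th y) = y.
Proof. apply (epsilon_spec (inhabits 0) (fun t => X t = y)), X_surj. Qed.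

Lemma Th_X (t : R) : Th (X t) = t.
Proof. exact (inv_left X Th X_Th X_strict t). Qed.

Lemma Th_strict (x y : R) : x < y -> Th x < Th y.
Proof. exact (inv_strict X Th X_Th X_strict x y). Qed.

Lemma Th_cont (y : R) : continuity_pt Th y.
Proof. exact (inv_continuous X Th X_Th X_strict y). Qed.

Lemma Th_deriv (y : R) : P (Th y) <> 0 -> derivable_pt_lim Th y (/ w (Th y)).
Proof. intros H. apply (inv_deriv X Th X_Th X_strict); [apply w_pos, H|apply X_deriv]. Qed.

Lemma Th_0 : Th 0 = 0.
Proof. rewrite <- X_0 at 1. apply Th_X. Qed.

Lemma Th_perZ (y : R) (k : Z) : Th (y + IZR k * T) = Th y + 2 * IZR k * PI.
Proof. rewrite <- (X_Th y) at 1. rewrite <- X_perZ. apply Th_X. Qed.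

Definition theta (x : R) : R := Th (T * x).

Lemma theta_cont (x : R) : continuity_pt theta x.
Proof.
  apply (continuity_pt_comp (fun x => T * x) Th); [|apply Th_cont].
  apply derivable_continuous_pt. exists (T * 1).
  apply derivable_pt_lim_scal, derivable_pt_lim_id.
Qed.

Lemma theta_chain (h : R -> R) (x l : R) : P (theta x) <> 0 ->
  derivable_pt_lim h (theta x) l ->
  derivable_pt_lim (fun x => h (theta x)) x (T * l / w (theta x)).
Proof.
  intros HP Hh. replace (T * l / w (theta x)) with (l * (/ w (theta x) * (T * 1)))
    by (unfold Rdiv; ring).
  apply (derivable_pt_lim_comp (fun x => Th (T * x)) h); auto.
  apply (derivable_pt_lim_comp (fun x => T * x) Th).
  - apply derivable_pt_lim_scal, derivable_pt_lim_id.
  - apply Th_deriv, HP.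
Qed.

Lemma theta_perZ (x : R) (k : Z) : theta (x + IZR k) = theta x + 2 * IZR k * PI.
Proof. unfold theta. rewrite Rmult_plus_distr_l, (Rmult_comm T (IZR k)). apply Th_perZ. Qed.

Lemma theta_0 : theta 0 = 0.
Proof. unfold theta. rewrite Rmult_0_r. apply Th_0. Qed.

Lemma theta_at (t : R) : theta (X t / T) = t.
Proof.
  unfold theta. pose proof T_pos. replace (T * (X t / T)) with (X t) by (field; lra).
  apply Th_X.
Qed.

Lemma theta_singular_int (x : R) : P (theta x) = 0 -> isint x.
Proof.
  intros H. apply P_zero_cos, cos_eq_1_inv in H as [k Hk].
  exists k. pose proof (X_perZ 0 k) as E. pose proof T_pos.
  rewrite Rplus_0_l, X_0, Rplus_0_l, <- Hk in E. unfold theta in E. rewrite X_Th in E.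
  apply (Rmult_eq_reg_l T); lra.
Qed.

Lemma theta_regular (x : R) : ~ isint x -> P (theta x) <> 0.
Proof. intros H E. apply H, theta_singular_int, E. Qed.

(* d/dx of an expression read at theta(x). *)
Definition Dx (e : texpr) : texpr := TMul (dexpr e) (TMul TRoot TInvP).

Lemma eval_Dx (e : texpr) (t : R) : P t <> 0 -> eval (Dx e) t = eval (dexpr e) t / w t.
Proof.
  intros H. simpl. unfold w. pose proof (root_pos t). field. split; lra.
Qed.

Lemma comp_deriv (e : texpr) (x : R) : P (theta x) <> 0 ->
  derivable_pt_lim (fun x => eval e (theta x)) x (T * eval (Dx e) (theta x)).
Proof.
  intros H. rewrite eval_Dx by auto. replace (T * (eval (dexpr e) (theta x) / w (theta x)))
    with (T * eval (dexpr e) (theta x) / w (theta x)) by (unfold Rdiv; ring).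
  apply theta_chain; auto. apply eval_deriv; auto.
Qed.

Lemma comp_cont (e : texpr) (x : R) : invP_free e ->
  continuity_pt (fun x => eval e (theta x)) x.
Proof.
  intros H. apply (continuity_pt_comp theta (eval e)); [apply theta_cont|].
  apply derivable_continuous_pt. eexists. apply eval_deriv; auto.
Qed.

(* Expressions for P and for J = P' sqrt(P + s) (so that ((phi - c)^2)' = 2 lam^2 T J). *)
Definition eP : texpr := TAdd (TConst al) (TMul (TConst (- be)) TCos).
Definition eJ : texpr := TMul (dexpr eP) TRoot.

Lemma eval_eP (t : R) : eval eP t = P t.
Proof. simpl. unfold P. ring. Qed.

(* G is a primitive of P w; its increment A over a period gives the mean of the wave. *)
Definition G (t : R) : R := RInt (fun u => P u * w u) 0 t.
Definition A : R := G (2 * PI).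

Lemma G_deriv (t : R) : derivable_pt_lim G t (P t * w t).
Proof.
  apply (RInt_deriv (fun u => P u * w u)). intro u. apply continuity_pt_mult; [|apply w_cont].
  apply derivable_continuous_pt. exists (be * sin u). apply P_deriv.
Qed.

Lemma G_0 : G 0 = 0.
Proof. exact (RInt_point 0 _). Qed.

Lemma A_nonneg : 0 <= A.
Proof.
  unfold A. pose proof PI_RGT_0.
  destruct (MVT_cor2 G (fun u => P u * w u) 0 (2 * PI) ltac:(lra) (fun c _ => G_deriv c))
    as [t [Ht _]].
  replace (G (2 * PI)) with (G (2 * PI) - G 0) by (rewrite G_0; ring).
  rewrite Ht. pose proof (P_nonneg t). pose proof (w_nonneg t).
  apply Rmult_le_pos; [apply Rmult_le_pos|]; lra.
Qed.

Variable c : R.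

(* The amplitude lam is fixed by the requirement that the mean of the wave is
   mu = - lam T^2 / 2. *)
Definition den : R := T ^ 2 / 2 + A / T.
Definition lam : R := - c / den.
Definition mu : R := - lam * T ^ 2 / 2.
Definition aa : R := - 2 * lam * T ^ 2 * c + lam ^ 2 * T ^ 2 * (s - 2 * al).

Definition phi (x : R) : R := c + lam * P (theta x).
Definition dphi (x : R) : R := lam * T * eval (Dx eP) (theta x).
Definition sq_deriv (x : R) : R := 2 * lam ^ 2 * T * eval eJ (theta x).
Definition sq_deriv2 (x : R) : R := 2 * lam ^ 2 * T ^ 2 * eval (Dx eJ) (theta x).
Definition Fphi (x : R) : R := c * x + lam / T * G (theta x).

Lemma den_pos : 0 < den.
Proof.
  unfold den. pose proof T_pos. pose proof A_nonneg.
  assert (0 <= A / T) by (apply Rmult_le_pos; [lra|left; apply Rinv_0_lt_compat; lra]).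
  nra.
Qed.

Lemma lam_neq0 : c <> 0 -> lam <> 0.
Proof.
  intros Hc E. unfold lam in E. pose proof den_pos. apply Hc.
  apply (Rmult_eq_compat_r den) in E. field_simplify in E; lra.
Qed.

Lemma mu_mean : mu = Fphi 1 - Fphi 0.
Proof.
  unfold Fphi. rewrite theta_0, G_0.
  replace (theta 1) with (2 * PI) by (unfold theta; rewrite Rmult_1_r; symmetry; apply Th_X).
  fold A.
  unfold mu, lam. pose proof den_pos. pose proof T_pos.
  replace A with (den * T - T ^ 3 / 2) by (unfold den; field; lra).
  field. split; lra.
Qed.

Lemma phi_cont (x : R) : continuity_pt phi x.
Proof.
  unfold phi. apply continuity_pt_plus; [apply continuity_pt_const; intros a b; auto|].
  apply continuity_pt_scal.
  apply (continuity_pt_ext (fun x => eval eP (theta x))); [intro; apply eval_eP|].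
  apply comp_cont. simpl; tauto.
Qed.

Lemma phi_per (x : R) : phi (x + 1) = phi x.
Proof.
  unfold phi. replace 1 with (IZR 1) by reflexivity. rewrite theta_perZ.
  rewrite <- !eval_eP, eval_perZ. reflexivity.
Qed.

Lemma phi_eval (x : R) : phi x = c + lam * eval eP (theta x).
Proof. unfold phi. rewrite eval_eP. reflexivity. Qed.

Lemma phi_deriv (x : R) : P (theta x) <> 0 -> derivable_pt_lim phi x (dphi x).
Proof.
  intros H. apply (derivable_pt_lim_ext (fun x => c + lam * eval eP (theta x)));
    [intro; symmetry; apply phi_eval|].
  unfold dphi. replace (lam * T * eval (Dx eP) (theta x))
    with (0 + lam * (T * eval (Dx eP) (theta x))) by ring.
  apply derivable_pt_lim_plus; [apply derivable_pt_lim_const|].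
  apply derivable_pt_lim_scal, comp_deriv, H.
Qed.

Lemma sq_deriv_spec (x : R) : P (theta x) <> 0 ->
  derivable_pt_lim (fun x => (phi x - c) ^ 2) x (sq_deriv x).
Proof.
  intros H. replace (sq_deriv x) with (INR 2 * (phi x - c) ^ Nat.pred 2 * (dphi x - 0)).
  - apply (derivable_pt_lim_comp (fun x => phi x - c) (fun y => y ^ 2)).
    + apply derivable_pt_lim_minus; [apply phi_deriv, H|apply derivable_pt_lim_const].
    + apply derivable_pt_lim_pow.
  - unfold sq_deriv, dphi, phi, eJ. rewrite eval_Dx by auto. simpl. unfold w.
    pose proof (root_pos (theta x)). field. split; [lra|exact H].
Qed.

Lemma sq_deriv2_spec (x : R) : P (theta x) <> 0 ->
  derivable_pt_lim sq_deriv x (sq_deriv2 x).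
Proof.
  intros H. unfold sq_deriv2. replace (2 * lam ^ 2 * T ^ 2 * eval (Dx eJ) (theta x))
    with (2 * lam ^ 2 * T * (T * eval (Dx eJ) (theta x))) by ring.
  apply derivable_pt_lim_scal, comp_deriv, H.
Qed.

Lemma Fphi_deriv (x : R) : P (theta x) <> 0 -> derivable_pt_lim Fphi x (phi x).
Proof.
  intros H. pose proof T_pos. pose proof (w_pos _ H).
  replace (phi x) with (c * 1 + lam / T * (T * (P (theta x) * w (theta x)) / w (theta x)))
    by (unfold phi; field; lra).
  apply derivable_pt_lim_plus.
  - apply derivable_pt_lim_scal, derivable_pt_lim_id.
  - apply derivable_pt_lim_scal, theta_chain; [exact H|apply G_deriv].
Qed.

Definition phi_D (n : nat) : R -> R :=
  match n with
  | O => phi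
  | S _ => fun x => lam * T ^ n * eval (Nat.iter n Dx eP) (theta x)
  end.

Lemma phi_D_deriv (n : nat) (x : R) : P (theta x) <> 0 ->
  derivable_pt_lim (phi_D n) x (phi_D (S n) x).
Proof.
  intros H. destruct n as [|m].
  - change (derivable_pt_lim phi x (lam * T ^ 1 * eval (Dx eP) (theta x))).
    replace (lam * T ^ 1 * eval (Dx eP) (theta x)) with (dphi x) by (unfold dphi; ring).
    apply phi_deriv, H.
  - change (phi_D (S (S m)) x) with (lam * T ^ S (S m) * eval (Dx (Nat.iter (S m) Dx eP)) (theta x)).
    replace (lam * T ^ S (S m) * eval (Dx (Nat.iter (S m) Dx eP)) (theta x))
      with (lam * T ^ S m * (T * eval (Dx (Nat.iter (S m) Dx eP)) (theta x))) by (simpl; ring).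
    apply derivable_pt_lim_scal, comp_deriv, H.
Qed.

Lemma phi_regular (x : R) : phi x <> c -> P (theta x) <> 0.
Proof. intros H E. apply H. unfold phi. rewrite E. ring. Qed.

Lemma phi_smooth_off : smooth_off phi c.
Proof.
  exists phi_D. split; [reflexivity|]. intros n x H. apply phi_D_deriv, phi_regular, H.
Qed.

(* If be < al then P > 0 everywhere and the wave is smooth. *)
Lemma phi_smooth : be < al -> smooth phi.
Proof.
  intros Hlt. exists phi_D. split; [reflexivity|]. intros n x. apply phi_D_deriv.
  pose proof (P_bounds (theta x)). lra.
Qed.

Lemma phi_at (t : R) : phi (X t / T) = c + lam * P t.
Proof. unfold phi. rewrite theta_at. reflexivity. Qed.

Lemma phi_nonconst : c <> 0 -> exists x y, phi x <> phi y.
Proof.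
  intros Hc. exists (X 0 / T), (X PI / T). rewrite !phi_at. unfold P.
  rewrite cos_0, cos_PI. pose proof (lam_neq0 Hc).
  intro E. assert (lam * be = 0) by lra. apply Rmult_integral in H0. lra.
Qed.

Lemma dphi_shift (y : R) (k : Z) : dphi y = lam * T * eval (Dx eP) (theta (y - IZR k)).
Proof.
  unfold dphi. replace y with ((y - IZR k) + IZR k) at 1 by ring.
  rewrite theta_perZ, eval_perZ. reflexivity.
Qed.

Lemma theta_small (eps : R) : 0 < eps -> exists eta, 0 < eta /\
  (forall z, 0 < z < eta -> 0 < theta z < eps) /\
  (forall z, - eta < z < 0 -> - eps < theta z < 0).
Proof.
  intros He. pose proof T_pos.
  destruct (continuity_pt_ball theta 0 eps (theta_cont 0) He) as [eta [Heta Hc]].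
  rewrite theta_0 in Hc. exists eta. split; auto.
  assert (Hmono : forall z, 0 < z -> 0 < theta z /\ theta (- z) < 0).
  { intros z Hz. rewrite <- theta_0. unfold theta. split; apply Th_strict; nra. }
  split; intros z Hz; specialize (Hc z ltac:(apply Rabs_def1; lra));
    rewrite Rminus_0_r in Hc; apply Rabs_def2 in Hc.
  - pose proof (Hmono z (proj1 Hz)). lra.
  - pose proof (Hmono (- z) ltac:(lra)). rewrite Ropp_involutive in H0. lra.
Qed.

Lemma slope_blowup (Hab : al = be) (Hs : 0 < s) (K : R) : exists eps, 0 < eps /\
  (forall u, 0 < u < eps -> K < eval (Dx eP) u) /\
  (forall u, - eps < u < 0 -> eval (Dx eP) u < - K).
Proof.
  pose proof PI_RGT_0. assert (Hsq : 0 < sqrt s) by (apply sqrt_lt_R0, Hs).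
  pose proof (Rabs_pos K). pose proof (Rle_abs K). pose proof (Rle_abs (- K)).
  rewrite Rabs_Ropp in *.
  set (eps := Rmin (PI / 2) (sqrt s / (Rabs K + 1))).
  assert (He1 : eps <= PI / 2) by apply Rmin_l.
  assert (He2 : eps * (Rabs K + 1) <= sqrt s).
  { pose proof (Rmin_r (PI / 2) (sqrt s / (Rabs K + 1))) as Hm.
    apply (Rmult_le_compat_r (Rabs K + 1)) in Hm; [|lra].
    replace (sqrt s / (Rabs K + 1) * (Rabs K + 1)) with (sqrt s) in Hm by (field; lra).
    exact Hm. }
  assert (He : 0 < eps) by (apply Rmin_glb_lt; [lra|apply Rdiv_lt_0_compat; lra]).
  assert (Hright : forall u, 0 < u < eps -> Rabs K < eval (Dx eP) u).
  { intros u Hu. pose proof (sin_ratio_gt u ltac:(lra)) as Hr.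
    assert (Hc : cos u < 1).
    { pose proof (sin_gt_0 u ltac:(lra) ltac:(lra)). pose proof (sin2_cos2 u) as SC.
      pose proof (COS_bound u). unfold Rsqr in SC. nra. }
    assert (HP : P u = be * (1 - cos u)) by (unfold P; rewrite Hab; ring).
    assert (HP0 : P u <> 0) by (rewrite HP; nra).
    rewrite eval_Dx by exact HP0. simpl. unfold w.
    assert (Hroot : sqrt s <= sqrt (P u + s)) by (apply sqrt_le_1_alt; pose proof (P_nonneg u); lra).
    pose proof (root_pos u). set (V := sqrt (P u + s)) in *.
    replace ((0 + (0 * cos u + - be * (-1 * sin u))) / (P u / V))
      with (V * (sin u / (1 - cos u))) by (rewrite HP; field; repeat split; lra).
    assert (sqrt s / u <= V * (sin u / (1 - cos u))).
    { replace (sqrt s / u) with (sqrt s * (1 / u)) by (field; lra).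
      apply Rmult_le_compat; try lra. left. apply Rdiv_lt_0_compat; lra. }
    assert (Rabs K + 1 <= sqrt s / u).
    { apply (Rmult_le_reg_r u); [lra|].
      replace (sqrt s / u * u) with (sqrt s) by (field; lra). nra. }
    lra. }
  exists eps. split; [exact He|split].
  - intros u Hu. pose proof (Hright u Hu). lra.
  - intros u Hu. pose proof (Hright (- u) ltac:(lra)) as Hm.
    replace (eval (Dx eP) (- u)) with (- eval (Dx eP) u) in Hm
      by (simpl; unfold P; rewrite sin_neg, cos_neg; ring).
    lra.
Qed.

Lemma phi_cusp (Hab : al = be) (Hs : 0 < s) (Hc : c <> 0) (x : R) :
  phi x = c -> cusp_at phi x.
Proof.
  intros Hx. assert (HP : P (theta x) = 0).
  { unfold phi in Hx. pose proof (lam_neq0 Hc). apply (Rmult_eq_reg_l lam); lra. }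
  destruct (theta_singular_int x HP) as [k ->].
  apply (cusp_from_blowup phi (fun y => eval (Dx eP) (theta (y - IZR k))) (IZR k) (lam * T)).
  - pose proof (lam_neq0 Hc). pose proof T_pos. apply Rmult_integral_contrapositive; split; lra.
  - intros y Hy. rewrite <- dphi_shift. apply phi_deriv, theta_regular.
    destruct Hy as [Hy0 Hy1]. destruct (Rlt_le_dec y (IZR k)).
    + apply (not_isint_between (k - 1)). rewrite minus_IZR.
      rewrite Rabs_left in Hy1 by lra. lra.
    + apply (not_isint_between k).
      rewrite Rabs_right in Hy0, Hy1 by lra. lra.
  - intros K. destruct (slope_blowup Hab Hs K) as [eps [He [HR HL]]].
    destruct (theta_small eps He) as [eta [Heta [TR TL]]].
    exists eta. split; [exact Heta|split]; intros y Hy;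
      [apply HR, TR|apply HL, TL]; lra.
Qed.

Hypothesis Hcase : s = 0 \/ al = be.

(* The algebraic heart of the construction (valid exactly when s (al^2 - be^2) = 0):
   in the phase variable the squared slope is an exact derivative plus an affine
   function of P. *)
Lemma slope_identity (t : R) : P t <> 0 ->
  (eval (Dx eP) t) ^ 2 = 2 * eval (Dx eJ) t + 2 * P t + s - 2 * al.
Proof.
  intros H. pose proof (root_pos t) as Hr.
  assert (HV : sqrt (P t + s) * sqrt (P t + s) = P t + s) by (apply sqrt_sqrt; left; apply Ps_pos).
  simpl. set (V := sqrt (P t + s)) in *.
  transitivity ((be * sin t) ^ 2 * (P t + s) / (P t) ^ 2).
  { rewrite <- HV. field. repeat split; (assumption || lra). }
  transitivity (2 * (be * cos t * (P t + s) + (be * sin t) ^ 2 / 2) / P t + 2 * P t + s - 2 * al).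
  2: { rewrite <- HV. field. repeat split; (assumption || lra). }
  assert (Hsin : sin t ^ 2 = 1 - cos t ^ 2) by (pose proof (sin2_cos2 t); unfold Rsqr in *; lra).
  replace ((be * sin t) ^ 2) with (be ^ 2 * sin t ^ 2) by ring. rewrite Hsin.
  unfold P in *. destruct Hcase as [-> | ->]; field; auto.
Qed.

Lemma dphi_sq (x : R) : P (theta x) <> 0 ->
  dphi x ^ 2 = sq_deriv2 x + (-4 * mu * phi x + aa).
Proof.
  intros H. unfold dphi, sq_deriv2, mu, aa, phi.
  replace ((lam * T * eval (Dx eP) (theta x)) ^ 2)
    with (lam ^ 2 * T ^ 2 * (eval (Dx eP) (theta x)) ^ 2) by ring.
  rewrite slope_identity by exact H. field.
Qed.

Lemma sq_deriv_cont (x : R) : continuity_pt sq_deriv x.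
Proof. apply continuity_pt_scal, comp_cont. simpl; tauto. Qed.

Lemma sq_cont (x : R) : continuity_pt (fun x => (phi x - c) ^ 2) x.
Proof.
  apply (continuity_pt_comp (fun x => phi x - c) (fun y => y ^ 2)).
  - apply continuity_pt_minus; [apply phi_cont|apply continuity_pt_const; intros a b; auto].
  - apply derivable_continuous_pt, derivable_pt_pow.
Qed.

Lemma Fphi_cont (x : R) : continuity_pt Fphi x.
Proof.
  apply continuity_pt_plus.
  - apply continuity_pt_scal, derivable_continuous_pt, derivable_pt_id.
  - apply continuity_pt_scal, (continuity_pt_comp theta G); [apply theta_cont|].
    apply derivable_continuous_pt. eexists. apply G_deriv.
Qed.

Definition source_prim (x : R) : R :=
  2 * lam * T ^ 2 * (Fphi x - c * x) + lam ^ 2 * T ^ 2 * (s - 2 * al) * x.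

Lemma source_prim_cont (x : R) : continuity_pt source_prim x.
Proof.
  pose proof (derivable_continuous_pt _ _ (derivable_pt_id x)).
  apply continuity_pt_plus; apply continuity_pt_scal; auto.
  apply continuity_pt_minus; [apply Fphi_cont|apply continuity_pt_scal; auto].
Qed.

Lemma source_prim_deriv (x : R) : P (theta x) <> 0 ->
  derivable_pt_lim source_prim x (-4 * mu * phi x + aa).
Proof.
  intros H. replace (-4 * mu * phi x + aa)
    with (2 * lam * T ^ 2 * (phi x - c * 1) + lam ^ 2 * T ^ 2 * (s - 2 * al) * 1)
    by (unfold mu, aa; field).
  apply derivable_pt_lim_plus; apply derivable_pt_lim_scal.
  - apply derivable_pt_lim_minus; [apply Fphi_deriv, H|].
    apply derivable_pt_lim_scal, derivable_pt_lim_id.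
  - apply derivable_pt_lim_id.
Qed.

(* phi is in H^1_loc with weak derivative dphi, since dphi^2 = (sq_deriv + source_prim)'. *)
Lemma phi_H1loc : H1loc_with phi dphi.
Proof.
  split; intros x y Hxy.
  - apply HK_FTC; auto.
    + intros; apply phi_cont.
    + intros t _ Ht. apply phi_deriv, theta_regular, Ht.
  - set (F2 := fun z => sq_deriv z + source_prim z).
    exists (F2 y - F2 x). apply HK_FTC; auto.
    + intros t _. apply continuity_pt_plus; [apply sq_deriv_cont|apply source_prim_cont].
    + intros t _ Ht. apply theta_regular in Ht. rewrite dphi_sq by exact Ht.
      apply derivable_pt_lim_plus; [apply sq_deriv2_spec|apply source_prim_deriv]; exact Ht.
Qed.

Lemma phi_mean : HK_integral phi 0 1 mu.
Proof.
  rewrite mu_mean. apply HK_FTC; [lra| |].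
  - intros; apply Fphi_cont.
  - intros t _ Ht. apply Fphi_deriv, theta_regular, Ht.
Qed.

(* The weak form follows by integrating by parts twice against the test function. *)
Lemma phi_weak : weak_eq phi dphi mu aa c.
Proof.
  intros D M HM Hd Hsupp.
  assert (Dc : forall n x, continuity_pt (D n) x)
    by (intros n x; apply derivable_continuous_pt; eexists; apply Hd).
  set (r := fun x => (-4 * mu * phi x + aa) * D 0%nat x + (phi x - c) ^ 2 * D 2%nat x).
  assert (Hrc : forall x, continuity_pt r x).
  { intro x. apply continuity_pt_plus; apply continuity_pt_mult; auto; [|apply sq_cont].
    apply continuity_pt_plus; [apply continuity_pt_scal, phi_cont|].
    apply continuity_pt_const; intros a b; auto. }
  set (Rr := fun x => RInt r 0 x).
  assert (HR : forall x, derivable_pt_lim Rr x (r x)) by (apply RInt_deriv, Hrc).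
  destruct (test_fn_boundary D M HM Hd Hsupp) as (D0M & D0mM & D1M & D1mM).
  exists (Rr M - Rr (- M)). split.
  - (* Ftot' = dphi^2 D off the integers, by dphi_sq and two product rules. *)
    set (Ftot := fun x => sq_deriv x * D 0%nat x - (phi x - c) ^ 2 * D 1%nat x + Rr x).
    replace (Rr M - Rr (- M)) with (Ftot M - Ftot (- M)).
    2: { unfold Ftot. rewrite D0M, D0mM, D1M, D1mM. ring. }
    apply HK_FTC; [lra| |].
    + intros t _. apply continuity_pt_plus; [apply continuity_pt_minus|].
      * apply continuity_pt_mult; [apply sq_deriv_cont|auto].
      * apply continuity_pt_mult; [apply sq_cont|auto].
      * apply derivable_continuous_pt. eexists. apply HR.
    + intros t _ Ht. apply theta_regular in Ht.
      replace (dphi t ^ 2 * D 0%nat t) with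
        ((sq_deriv2 t * D 0%nat t + sq_deriv t * D 1%nat t)
         - (sq_deriv t * D 1%nat t + (phi t - c) ^ 2 * D 2%nat t) + r t)
        by (unfold r; rewrite dphi_sq by exact Ht; ring).
      apply derivable_pt_lim_plus; [apply derivable_pt_lim_minus|apply HR].
      * apply derivable_pt_lim_mult; [apply sq_deriv2_spec, Ht|apply Hd].
      * apply (derivable_pt_lim_mult (fun x => (phi x - c) ^ 2)); [apply sq_deriv_spec, Ht|apply Hd].
  - apply HK_FTC; [lra| |].
    + intros t _. apply derivable_continuous_pt. eexists. apply HR.
    + intros t _ _. apply HR.
Qed.

Lemma phi_traveling_wave : traveling_wave c phi.
Proof.
  split; [apply phi_per|].
  exists dphi, mu, aa. split; [apply phi_H1loc|split; [apply phi_mean|apply phi_weak]].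
Qed.

(* Off the cusps, (phi - c) phi'^2 is a quadratic polynomial in phi - c whose
   coefficients encode the parameters (al, be, s) and lam. *)
Lemma slope_relation (x : R) : P (theta x) <> 0 ->
  (phi x - c) * dphi x ^ 2 =
  - (lam * T ^ 2) * (phi x - c - lam * (al + be)) * (phi x - c - lam * (al - be - s)).
Proof.
  intros H. unfold phi, dphi. pose proof (root_pos (theta x)) as Hr.
  set (t := theta x) in *.
  assert (HV : sqrt (P t + s) * sqrt (P t + s) = P t + s) by (apply sqrt_sqrt; left; apply Ps_pos).
  simpl. set (V := sqrt (P t + s)) in *.
  transitivity (lam ^ 3 * T ^ 2 * (be ^ 2 * sin t ^ 2) * (V * V) / P t).
  { field. repeat split; (assumption || lra). }
  rewrite HV.
  assert (Hsin : sin t ^ 2 = 1 - cos t ^ 2) by (pose proof (sin2_cos2 t); unfold Rsqr in *; lra).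
  rewrite Hsin. unfold P in *. destruct Hcase as [-> | ->]; field; auto.
Qed.
End Profile.

Lemma quadratic_coeffs_eq (k1 a1 b1 k2 a2 b2 y1 y2 y3 : R) :
  y1 <> y2 -> y1 <> y3 -> y2 <> y3 ->
  (forall y, y = y1 \/ y = y2 \/ y = y3 ->
     k1 * (y - a1) * (y - b1) = k2 * (y - a2) * (y - b2)) ->
  k1 = k2 /\ k1 * (a1 + b1) = k2 * (a2 + b2) /\ k1 * (a1 * b1) = k2 * (a2 * b2).
Proof.
  intros N12 N13 N23 E.
  set (qA := k1 - k2). set (qB := k2 * (a2 + b2) - k1 * (a1 + b1)).
  set (qC := k1 * (a1 * b1) - k2 * (a2 * b2)).
  assert (F : forall y, y = y1 \/ y = y2 \/ y = y3 -> qA * y ^ 2 + qB * y + qC = 0)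
    by (intros y Hy; specialize (E y Hy); unfold qA, qB, qC; lra).
  pose proof (F y1 ltac:(auto)) as F1. pose proof (F y2 ltac:(auto)) as F2.
  pose proof (F y3 ltac:(auto)) as F3.
  assert (G12 : (y1 - y2) * (qA * (y1 + y2) + qB) = 0) by lra.
  assert (G13 : (y1 - y3) * (qA * (y1 + y3) + qB) = 0) by lra.
  apply Rmult_integral in G12 as [G12|G12]; [lra|].
  apply Rmult_integral in G13 as [G13|G13]; [lra|].
  assert (HA : qA * (y2 - y3) = 0) by lra.
  apply Rmult_integral in HA as [HA|HA]; [|lra].
  assert (HB : qB = 0) by (rewrite HA in G12; lra).
  assert (HC : qC = 0) by (rewrite HA, HB in F1; lra).
  unfold qA, qB, qC in *. lra.
Qed.

Section Translates.
Variables (al1 be1 s1 al2 be2 s2 c : R).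
Hypotheses (Hbe1 : 0 < be1) (Hle1 : be1 <= al1) (Hpos1 : 0 < al1 - be1 + s1)
  (Hcase1 : s1 = 0 \/ al1 = be1).
Hypotheses (Hbe2 : 0 < be2) (Hle2 : be2 <= al2) (Hpos2 : 0 < al2 - be2 + s2)
  (Hcase2 : s2 = 0 \/ al2 = be2).
Hypothesis Hc : c <> 0.

Local Notation phi1 := (phi al1 be1 s1 c).
Local Notation phi2 := (phi al2 be2 s2 c).
Local Notation lam1 := (lam al1 be1 s1 c).
Local Notation lam2 := (lam al2 be2 s2 c).

(* lam = - c / den with den > 0, so both amplitudes have the sign of - c. *)
Lemma lam_same_sign : 0 < lam1 * lam2.
Proof.
  unfold lam. pose proof (den_pos al1 be1 s1 Hbe1 Hle1 Hpos1).
  pose proof (den_pos al2 be2 s2 Hbe2 Hle2 Hpos2).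
  replace (- c / den al1 be1 s1 * (- c / den al2 be2 s2))
    with (c * c / (den al1 be1 s1 * den al2 be2 s2)) by (field; lra).
  apply Rdiv_lt_0_compat; [|nra]. pose proof (Rsqr_pos_lt c Hc). unfold Rsqr in *. lra.
Qed.

Lemma translate_slope (tau x : R) : (forall y, phi1 y = phi2 (y + tau)) ->
  phi1 x <> c ->
  phi2 (x + tau) = phi1 x /\
  P al2 be2 (theta al2 be2 s2 (x + tau)) <> 0 /\
  dphi al2 be2 s2 c (x + tau) = dphi al1 be1 s1 c x.
Proof.
  intros Ht Hx. rewrite <- Ht.
  assert (H1 := phi_regular al1 be1 s1 c x Hx).
  assert (H2 : P al2 be2 (theta al2 be2 s2 (x + tau)) <> 0)
    by (apply (phi_regular al2 be2 s2 c); rewrite <- Ht; exact Hx).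
  split; [reflexivity|split; [exact H2|]].
  apply (uniqueness_limite phi1 x).
  - apply (derivable_pt_lim_ext (fun y => phi2 (y + tau))); [intro; symmetry; apply Ht|].
    apply derivable_pt_lim_shift, phi_deriv; auto.
  - apply phi_deriv; auto.
Qed.

Lemma translate_quadratic (tau t : R) : (forall y, phi1 y = phi2 (y + tau)) ->
  P al1 be1 t <> 0 ->
  let y := lam1 * P al1 be1 t in
  - (lam1 * T al1 be1 s1 ^ 2) * (y - lam1 * (al1 + be1)) * (y - lam1 * (al1 - be1 - s1)) =
  - (lam2 * T al2 be2 s2 ^ 2) * (y - lam2 * (al2 + be2)) * (y - lam2 * (al2 - be2 - s2)).
Proof.
  intros Ht Ht0 y. pose proof (lam_neq0 al1 be1 s1 Hbe1 Hle1 Hpos1 c Hc) as Hl.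
  set (x := X al1 be1 s1 t / T al1 be1 s1).
  assert (Ey : phi1 x - c = y) by (unfold x, y; rewrite phi_at; auto; ring).
  assert (Hx : phi1 x <> c)
    by (intro E; apply Ht0, (Rmult_eq_reg_l lam1); auto; unfold y in Ey; lra).
  destruct (translate_slope tau x Ht Hx) as (E2 & H2 & D2).
  rewrite <- Ey.
  rewrite <- (slope_relation al1 be1 s1 Hbe1 Hle1 Hpos1 c Hcase1 x)
    by (apply (phi_regular al1 be1 s1 c), Hx).
  rewrite <- E2, <- D2. apply slope_relation; auto.
Qed.

(* Translates share the coefficients of the slope relation: compare the two
   quadratics at the phases PI/3, PI/2 and PI. *)
Lemma translate_invariants : translates phi1 phi2 ->
  lam1 * T al1 be1 s1 ^ 2 = lam2 * T al2 be2 s2 ^ 2 /\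
  lam1 * (2 * al1 - s1) = lam2 * (2 * al2 - s2) /\
  lam1 ^ 2 * ((al1 + be1) * (al1 - be1 - s1)) = lam2 ^ 2 * ((al2 + be2) * (al2 - be2 - s2)).
Proof.
  intros [tau Ht].
  pose proof (lam_neq0 al1 be1 s1 Hbe1 Hle1 Hpos1 c Hc) as Hl.
  pose proof (T_pos al1 be1 s1 Hbe1 Hle1 Hpos1) as HT.
  set (y t := lam1 * P al1 be1 t).
  pose proof PI_RGT_0.
  assert (HP : forall t, t = PI / 3 \/ t = PI / 2 \/ t = PI -> P al1 be1 t <> 0).
  { intros t Hth. unfold P.
    destruct Hth as [-> | [-> | ->]]; rewrite ?cos_PI3, ?cos_PI2, ?cos_PI; lra. }
  assert (Hy : y (PI / 3) = lam1 * (al1 - be1 / 2) /\ y (PI / 2) = lam1 * al1 /\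
               y PI = lam1 * (al1 + be1)).
  { unfold y, P. rewrite cos_PI3, cos_PI2, cos_PI. repeat split; field. }
  destruct Hy as (Y1 & Y2 & Y3).
  destruct (quadratic_coeffs_eq (- (lam1 * T al1 be1 s1 ^ 2)) (lam1 * (al1 + be1))
    (lam1 * (al1 - be1 - s1)) (- (lam2 * T al2 be2 s2 ^ 2)) (lam2 * (al2 + be2))
    (lam2 * (al2 - be2 - s2)) (y (PI / 3)) (y (PI / 2)) (y PI)) as (K & S & Pr).
  1-3: rewrite ?Y1, ?Y2, ?Y3; intro E; apply Hl; nra.
  { intros v Hv. destruct Hv as [-> | [-> | ->]]; apply (translate_quadratic tau), HP; auto. }
  assert (Hk : lam1 * T al1 be1 s1 ^ 2 <> 0)
    by (apply Rmult_integral_contrapositive; split; [exact Hl|apply pow_nonzero; lra]).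
  split; [lra|split].
  - apply (Rmult_eq_reg_l (- (lam1 * T al1 be1 s1 ^ 2))); [|lra].
    rewrite K at 2. lra.
  - apply (Rmult_eq_reg_l (- (lam1 * T al1 be1 s1 ^ 2))); [|lra].
    rewrite K at 2. lra.
Qed.
End Translates.

Definition smooth_profile (c t : R) : R -> R := phi 1 t 0 c.

Definition cusped_profile (c t : R) : R -> R := phi 1 1 t c.

Lemma smooth_profile_wave (c t : R) : c <> 0 -> 0 < t < 1 -> smooth_wave c (smooth_profile c t).
Proof.
  intros Hc Ht. unfold smooth_wave, smooth_profile. split; [|split].
  - apply phi_traveling_wave; auto; lra.
  - apply phi_smooth; lra.
  - apply phi_nonconst; auto; lra.
Qed.

Lemma cusped_profile_wave (c t : R) : c <> 0 -> 0 < t < 1 -> cusped_wave c (cusped_profile c t).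
Proof.
  intros Hc Ht. unfold cusped_wave, cusped_profile. split; [|split; [|split]].
  - apply phi_traveling_wave; auto; lra.
  - apply phi_smooth_off; lra.
  - exists 0. unfold phi. rewrite theta_0 by lra. unfold P. rewrite cos_0. ring.
  - apply phi_cusp; auto; lra.
Qed.

(* The invariants lam (2 al - s) = 2 lam and lam^2 (1 - t^2) recover t. *)
Lemma smooth_profile_distinct (c t t' : R) : c <> 0 -> 0 < t < 1 -> 0 < t' < 1 ->
  translates (smooth_profile c t) (smooth_profile c t') -> t = t'.
Proof.
  intros Hc Ht Ht' Htr.
  destruct (translate_invariants 1 t 0 1 t' 0 c) as (_ & Hsum & Hprod); auto; try lra.
  pose proof (lam_neq0 1 t 0 ltac:(lra) ltac:(lra) ltac:(lra) c Hc) as Hl.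
  set (l := lam 1 t 0 c) in *. set (l' := lam 1 t' 0 c) in *.
  assert (E : l = l') by lra. rewrite <- E in Hprod.
  assert (l ^ 2 * (t' - t) * (t' + t) = 0) by nra.
  assert (l ^ 2 <> 0) by (apply pow_nonzero; exact Hl).
  apply Rmult_integral in H as [H|H]; [apply Rmult_integral in H as [H|H]|]; lra.
Qed.

(* The invariants lam (2 - t) and - 2 lam^2 t recover t, as amplitudes have equal signs. *)
Lemma cusped_profile_distinct (c t t' : R) : c <> 0 -> 0 < t < 1 -> 0 < t' < 1 ->
  translates (cusped_profile c t) (cusped_profile c t') -> t = t'.
Proof.
  intros Hc Ht Ht' Htr.
  destruct (translate_invariants 1 1 t 1 1 t' c) as (_ & Hsum & Hprod); auto; try lra.
  pose proof (lam_neq0 1 1 t ltac:(lra) ltac:(lra) ltac:(lra) c Hc) as Hl.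
  pose proof (lam_same_sign 1 1 t 1 1 t' c) as Hpp.
  set (l := lam 1 1 t c) in *. set (l' := lam 1 1 t' c) in *.
  assert (Hpos : 0 < l * l') by (apply Hpp; lra || auto).
  assert (E : (l - l') * (l * t + 2 * l') = 0) by nra.
  assert (0 < (l * t + 2 * l') * l) by nra.
  apply Rmult_integral in E as [E|E]; [|rewrite E in H; lra].
  assert (l = l') by lra. subst l'. nra.
Qed.

Theorem theorem6p3 (c : R) (hc : c <> 0) :
  one_param_family (smooth_wave c) /\ one_param_family (cusped_wave c).
Proof.
  split.
  - exists 0, 1, (smooth_profile c). split; [lra|split].
    + intros t Ht. apply smooth_profile_wave; auto.
    + intros t t' Ht Ht' Hne Htr. apply Hne, (smooth_profile_distinct c); auto.
  - exists 0, 1, (cusped_profile c). split; [lra|split].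
    + intros t Ht. apply cusped_profile_wave; auto.
    + intros t t' Ht Ht' Hne Htr. apply Hne, (cusped_profile_distinct c); auto.
Qed.
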